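(* Let $G = K \rtimes_\varphi \langle t\rangle$ be a finitely generated group, where $K$ is abelian, $\langle t\rangle$ is infinite cyclic and $\varphi\in\mathrm{Aut}(K)$. Let $R$ be a finite symmetric subset of $K$ such that $S=R\cup\{t^{\pm1}\}$ generates $G$. Let $g\in G$ be a minimal length conjugacy representative. (i) If the $t$-exponent sum of $g$ is $0$, then there is $w\in\mathcal C_0$ such that $g$ is represented by some cyclic permutation of $w$. (ii) If the $t$-exponent sum of $g$ is $m>0$, then there is $w\in\mathcal C_m$ such that $g$ is represented by some cyclic permutation of $w$.
   Context: $K$ is written additively; $(x,t^m)$ has $t$-exponent sum $m$; $tkt^{-1}=\varphi(k)$. An element $g$ is a minimal length conjugacy representative if its word length (w.r.t. $S$) is minimal among all its conjugates. $W(R)$ is the set of words in $R$; a word is a geodesic if its freely reduced length equals the word length of the element it represents. $W'$ is the set of geodesic words of the form $t^{-p}u_0\,t\,u_1\,t\cdots u_{d-1}\,t\,u_d\,t^{-q}t^{m}$ with $p,q,m\ge0$, $d=p+q$, $u_i\in W(R)$. $\mathcal C_0=\{u_0tu_1t\cdots u_{d-1}tu_dt^{-d}\in W' : d\ge0,\ u_i\in W(R)\}$ and, for $m>0$, $\mathcal C_m=\{u_0tu_1t\cdots u_{m-1}t\in W' : u_i\in W(R)\}$. A cyclic permutation of a word $s_1\cdots s_\ell$ is a word $s_{j+1}\cdots s_\ell s_1\cdots s_j$. *)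

From mathcomp Require Import all_boot all_order all_algebra.
Set Implicit Arguments. Unset Strict Implicit. Unset Printing Implicit Defensive.
Import GRing.Theory.
Local Open Scope ring_scope.

(* G = K ⋊_phi <t>, elements (x, m) standing for x t^m, with x : K, m : int.
   phiinv is the inverse automorphism of phi. t k t^-1 = phi k, so
   (x t^m)(y t^n) = (x + phi^m y) t^(m+n). *)

Definition phipow (K : zmodType) (phi phiinv : K -> K) (m : int) : K -> K :=
  match m with
  | Posz n => iter n phi
  | Negz n => iter n.+1 phiinv
  end.

Definition gmul (K : zmodType) (phi phiinv : K -> K) (g h : K * int) : K * int :=
  (g.1 + phipow phi phiinv g.2 h.1, g.2 + h.2).

Definition ginv (K : zmodType) (phi phiinv : K -> K) (g : K * int) : K * int :=
  (- phipow phi phiinv (- g.2) g.1, - g.2).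

Definition gone (K : zmodType) : K * int := (0, 0).

(* Letters of S = R ∪ {t, t^-1}: inl k is the generator k ∈ K,
   inr true is t, inr false is t^-1. Words are seqs of letters. *)
Definition letter (K : zmodType) := (K + bool)%type.

Definition eval_letter (K : zmodType) (l : letter K) : K * int :=
  match l with
  | inl k => (k, 0)
  | inr true => (0, 1)
  | inr false => (0, -1)
  end.

Definition evalw (K : zmodType) (phi phiinv : K -> K) (w : seq (letter K)) : K * int :=
  foldr (fun l acc => gmul phi phiinv (eval_letter l) acc) (gone K) w.

Definition linv (K : zmodType) (l : letter K) : letter K :=
  match l with
  | inl k => inl (- k)
  | inr b => inr (~~ b)
  end.

Definition freduce (K : zmodType) (w : seq (letter K)) : seq (letter K) :=
  foldr (fun x r => match r with
                    | y :: r' => if y == linv x then r' else x :: r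
                    | [::] => [:: x]
                    end) [::] w.

Definition inS (K : zmodType) (R : seq K) (l : letter K) : bool :=
  match l with inl k => k \in R | inr _ => true end.

Definition inR (K : zmodType) (R : seq K) (l : letter K) : bool :=
  match l with inl k => k \in R | inr _ => false end.

Definition word_over (K : zmodType) (R : seq K) (w : seq (letter K)) : bool :=
  all (inS R) w.

Definition geodesic (K : zmodType) (phi phiinv : K -> K) (R : seq K)
    (w : seq (letter K)) : Prop :=
  word_over R w /\
  forall w', word_over R w' -> evalw phi phiinv w' = evalw phi phiinv w ->
    (size (freduce w) <= size w')%N.

Definition join_t (K : zmodType) (us : seq (seq (letter K))) : seq (letter K) :=
  match us with
  | [::] => [::]
  | u :: rest => u ++ flatten [seq inr true :: v | v <- rest]
  end.

Definition tpow (K : zmodType) (b : bool) (n : nat) : seq (letter K) := nseq n (inr b).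

Definition inWprime (K : zmodType) (phi phiinv : K -> K) (R : seq K)
    (w : seq (letter K)) : Prop :=
  geodesic phi phiinv R w /\
  exists (p q m : nat) (us : seq (seq (letter K))),
    size us = (p + q).+1 /\ all (all (inR R)) us /\
    w = tpow K false p ++ join_t us ++ tpow K false q ++ tpow K true m.

Definition inC0 (K : zmodType) (phi phiinv : K -> K) (R : seq K)
    (w : seq (letter K)) : Prop :=
  inWprime phi phiinv R w /\
  exists (d : nat) (us : seq (seq (letter K))),
    size us = d.+1 /\ all (all (inR R)) us /\
    w = join_t us ++ tpow K false d.

(* the set C_m, m > 0: u_0 t u_1 t ... u_{m-1} t, geodesic
   (it lies in W' up to free reduction) *)
Definition inCm (K : zmodType) (phi phiinv : K -> K) (R : seq K) (m : nat)
    (w : seq (letter K)) : Prop :=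
  geodesic phi phiinv R w /\
  exists us : seq (seq (letter K)),
    size us = m /\ all (all (inR R)) us /\
    w = flatten [seq u ++ [:: inr true] | u <- us].

Definition min_conj_rep (K : zmodType) (phi phiinv : K -> K) (R : seq K)
    (g : K * int) : Prop :=
  exists wg, word_over R wg /\ evalw phi phiinv wg = g /\
    forall (h : K * int) (w : seq (letter K)), word_over R w ->
      evalw phi phiinv w = gmul phi phiinv (gmul phi phiinv h g) (ginv phi phiinv h) ->
      (size wg <= size w)%N.

From mathcomp Require Import all_boot all_order all_algebra.
From mathcomp Require Import zify ring.
Set Implicit Arguments.
Unset Strict Implicit.
Unset Printing Implicit Defensive.
Import Order.TTheory GRing.Theory Num.Theory.
Local Open Scope ring_scope.

(* A word over S is recorded by its t-exponent sum and by its letters k in K,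
   each at its height h (the t-exponent sum of the prefix before it); the
   word then represents (sum of phi^h(k), t-exponent sum), so regrouping the
   letters by height does not change the element, and rotating a word
   conjugates it.
   If g has exponent sum 0 and its geodesic has d letters t (hence d letters
   t^-1), the heights measured from the lowest prefix fill [0, d]; collecting
   the letters of height i into u_i gives u_0 t ... t u_d t^-d, a word of the
   same length, a rotation of which represents g.
   If the exponent sum is m > 0, reducing all heights mod m only conjugates
   by an element of K and gives u_0 t ... u_(m-1) t, with one letter t per
   unit of m; by minimality the geodesic has no t^-1 at all, so it is itself
   a rotation of such a word. *)

Lemma count_take_le {T : Type} (a : pred T) i s : (count a (take i s) <= count a s)%N.
Proof. by rewrite -[in X in (_ <= X)%N](cat_take_drop i s) count_cat leq_addr. Qed.

Lemma count_take_mono {T : Type} (a : pred T) s i j : (i <= j)%N ->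
  (count a (take i s) <= count a (take j s))%N.
Proof. by move=> ij; rewrite -(take_takel s ij) count_take_le. Qed.

Section SemidirectProduct.
Variables (K : zmodType) (phi phiinv : K -> K).
Hypotheses (phiD : {morph phi : x y / x + y}) (phiK : cancel phi phiinv)
  (phiinvK : cancel phiinv phi).

Local Notation P := (phipow phi phiinv).
Local Notation ev := (evalw phi phiinv).
Local Notation gconj h x :=
  (gmul phi phiinv (gmul phi phiinv h x) (ginv phi phiinv h)).

Lemma phiinvD : {morph phiinv : x y / x + y}.
Proof. by move=> x y; apply: (can_inj phiK); rewrite phiD !phiinvK. Qed.

Lemma phipowD n : {morph P n : x y / x + y}.
Proof.
have iterD f : {morph f : x y / x + y} -> forall k, {morph iter k f : x y / x + y}.
  by move=> fD; elim=> [|k IH] x y //=; rewrite IH fD.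
by case: n => n; [exact: iterD | exact: iterD phiinvD _].
Qed.

Lemma phipow0 n : P n 0 = 0.
Proof. by apply: (addrI (P n 0)); rewrite -phipowD !addr0. Qed.

Lemma phipowN n x : P n (- x) = - P n x.
Proof. by apply/eqP; rewrite -addr_eq0 -phipowD addNr phipow0. Qed.

Lemma phi_phipow n x : phi (P n x) = P (n + 1) x.
Proof.
case: n => [k|[|k]].
- by have -> : Posz k + 1 = Posz k.+1 by lia.
- by rewrite /= phiinvK.
- have -> : Negz k.+1 + 1 = Negz k by rewrite !NegzE; lia.
  by rewrite [P (Negz k.+1) x]/= phiinvK.
Qed.

Lemma phiinv_phipow n x : phiinv (P n x) = P (n - 1) x.
Proof.
case: n => [[|k]|k] //.
- have -> : Posz k.+1 - 1 = Posz k by lia.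
  by rewrite /= phiK.
- by have -> : Negz k - 1 = Negz k.+1 by rewrite !NegzE; lia.
Qed.

Lemma phipow_comp a b x : P a (P b x) = P (b + a) x.
Proof.
case: a => k; elim: k => [|k IH]; first by rewrite addr0.
- rewrite -[P k.+1 _]/(phi (P k _)) IH phi_phipow.
  by congr (P _ x); lia.
- by rewrite -phiinv_phipow.
- rewrite -[P (Negz k.+1) _]/(phiinv (P (Negz k) _)) IH phiinv_phipow.
  by congr (P _ x); rewrite !NegzE; lia.
Qed.

Definition is_t (l : letter K) : bool := if l is inr b then b else false.
Definition is_tinv (l : letter K) : bool := if l is inr b then ~~ b else false.
Definition tcount (w : seq (letter K)) : nat := count is_t w.
Definition tinvcount (w : seq (letter K)) : nat := count is_tinv w.
Definition texp (w : seq (letter K)) : int := (tcount w)%:Z - (tinvcount w)%:Z.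

Definition lift_heights (s : int) (L : seq (int * K)) : seq (int * K) :=
  [seq (p.1 + s, p.2) | p <- L].

Fixpoint heights (w : seq (letter K)) : seq (int * K) :=
  match w with
  | [::] => [::]
  | inl k :: w' => (0, k) :: heights w'
  | inr b :: w' => lift_heights (if b then 1 else -1) (heights w')
  end.

Definition hsum (L : seq (int * K)) : K := \sum_(p <- L) P p.1 p.2.

Lemma size_word w : size w = (size (heights w) + tcount w + tinvcount w)%N.
Proof.
rewrite /tcount /tinvcount.
by elim: w => [|[k|[]] w IH] //=; rewrite ?size_map IH ?add0n ?add1n ?addnS ?addSn.
Qed.

Lemma lift_heights0 L : lift_heights 0 L = L.
Proof. by rewrite /lift_heights -[RHS]map_id; apply: eq_map => -[h k]; rewrite addr0. Qed.

Lemma lift_heights_comp s t L :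
  lift_heights s (lift_heights t L) = lift_heights (t + s) L.
Proof. by rewrite /lift_heights -map_comp; apply: eq_map => p /=; rewrite addrA. Qed.

Lemma lift_heights_cat s L1 L2 :
  lift_heights s (L1 ++ L2) = lift_heights s L1 ++ lift_heights s L2.
Proof. exact: map_cat. Qed.

Lemma hsum_cat L1 L2 : hsum (L1 ++ L2) = hsum L1 + hsum L2.
Proof. exact: big_cat. Qed.

Lemma hsum_lift s L : hsum (lift_heights s L) = P s (hsum L).
Proof.
rewrite /hsum big_map; elim: L => [|p L IH]; first by rewrite !big_nil phipow0.
by rewrite !big_cons IH phipowD phipow_comp.
Qed.

Lemma texp_cat u v : texp (u ++ v) = texp u + texp v.
Proof. rewrite /texp /tcount /tinvcount !count_cat; lia. Qed.

Lemma heights_cat u v :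
  heights (u ++ v) = heights u ++ lift_heights (texp u) (heights v).
Proof.
elim: u => [|[k|b] u IH] /=; first by rewrite lift_heights0.
- by rewrite IH.
- rewrite IH lift_heights_cat lift_heights_comp; congr (_ ++ lift_heights _ _).
  by rewrite /texp /tcount /tinvcount; case: b => /=; lia.
Qed.

Lemma evalw_heights w : ev w = (hsum (heights w), texp w).
Proof.
elim: w => [|l w IH]; first by rewrite /hsum big_nil.
rewrite -[ev _]/(gmul phi phiinv (eval_letter l) (ev w)) IH -cat1s heights_cat.
rewrite texp_cat hsum_cat hsum_lift /gmul /texp /tcount /tinvcount.
by case: l => [k|[]]; rewrite /hsum /= ?big_cons ?big_nil /= ?addr0.
Qed.

Lemma evalw_rot_conj j w : ev w = gconj (ev (take j w)) (ev (rot j w)).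
Proof.
rewrite -{1}(cat_take_drop j w) /rot; move: (take j w) (drop j w) => X Y.
rewrite !evalw_heights !heights_cat !texp_cat !hsum_cat !hsum_lift /gmul /ginv /=.
move: (hsum _) (hsum _) (texp X) (texp Y) => u v a b.
congr (_, _); last by ring.
rewrite phipowN !phipowD !phipow_comp.
have -> : - a + (a + (b + a)) = b + a by ring.
by rewrite addrA addrK.
Qed.

Lemma evalw_rot_balanced j w : texp w = 0 ->
  ev (rot j w) = (P (- texp (take j w)) (hsum (heights w)), 0).
Proof.
rewrite /rot; set X := take j w; set Y := drop j w.
rewrite -(cat_take_drop j w) -/X -/Y evalw_heights; clearbody X Y.
rewrite !texp_cat !heights_cat !hsum_cat !hsum_lift phipowD phipow_comp => XY0.
have -> : texp Y = - texp X by apply/eqP; rewrite -addr_eq0 addrC XY0.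
by rewrite subrr addNr addrC.
Qed.

Lemma size_freduce (w : seq (letter K)) : (size (freduce w) <= size w)%N.
Proof.
elim: w => [|x w IH] //=; rewrite -/(freduce w).
by case: (freduce w) IH => [|y r] //= IH; case: ifP => _ /=; lia.
Qed.

Definition layer (M : seq (int * K)) (i : nat) : seq K :=
  [seq p.2 | p <- M & p.1 == i%:Z].

Definition layered (F : nat -> seq K) (s : seq nat) : seq (int * K) :=
  flatten [seq [seq (i%:Z, k) | k <- F i] | i <- s].

Lemma layer_pairs M i : [seq (i%:Z, k) | k <- layer M i] = [seq p <- M | p.1 == i%:Z].
Proof.
rewrite /layer -map_comp -[RHS]map_id; apply/eq_in_map => -[h k].
by rewrite mem_filter /= => /andP[/eqP -> _].
Qed.

Lemma perm_layered M s : uniq s -> {in M, forall p, p.1 \in [seq i%:Z | i <- s]} ->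
  perm_eq (layered (layer M) s) M.
Proof.
elim: s M => [|i s IH] M /=; first by case: M => // p M _ /(_ p (mem_head _ _)).
case/andP=> i_s s_uniq HM; set M' := [seq p <- M | p.1 != i%:Z].
rewrite -[layered _ _]/([seq (i%:Z, k) | k <- layer M i] ++ layered (layer M) s).
rewrite layer_pairs perm_sym -(perm_filterC (fun p => p.1 == i%:Z)) perm_sym perm_cat2l.
have -> : layered (layer M) s = layered (layer M') s.
  congr flatten; apply/eq_in_map => j js; congr map.
  rewrite /layer /M' -filter_predI; congr map; apply: eq_filter => p /=.
  by case: eqP => //= ->; apply/esym; apply: contraNneq i_s => -[<-].
apply: IH => // p; rewrite mem_filter => /andP[pi /HM]; rewrite inE.
by rewrite (negbTE pi).
Qed.

Lemma perm_layered_iota {M N} : {in M, forall p, 0 <= p.1 < N%:Z} ->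
  perm_eq (layered (layer M) (iota 0 N)) M.
Proof.
move=> HM; apply: perm_layered (iota_uniq 0 N) _ => p /HM.
case: p => [[n|//] k] /= nN.
by apply/mapP; exists n; rewrite // mem_iota.
Qed.

Definition ladder (F : nat -> seq K) (a n : nat) : seq (letter K) :=
  join_t [seq map inl (F i) | i <- iota a n.+1].

Lemma ladderS F a n : ladder F a n.+1 = map inl (F a) ++ inr true :: ladder F a.+1 n.
Proof. by []. Qed.

Lemma heights_gens (u : seq K) : heights (map inl u) = [seq (0, k) | k <- u].
Proof. by elim: u => //= k u ->. Qed.

Lemma texp_gens (u : seq K) : texp (map inl u) = 0.
Proof. by rewrite /texp /tcount /tinvcount; elim: u. Qed.

Lemma heights_ladder F a n :
  heights (ladder F a n) = lift_heights (- a%:Z) (layered F (iota a n.+1)).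
Proof.
elim: n a => [|n IH] a.
  rewrite /ladder /layered /= !cats0 heights_gens /lift_heights -map_comp.
  by apply: eq_map => k /=; rewrite subrr.
rewrite ladderS heights_cat texp_gens /= lift_heights0 IH lift_heights_comp.
rewrite heights_gens -[layered F (iota a n.+2)]/
  ([seq (a%:Z, k) | k <- F a] ++ layered F (iota a.+1 n.+1)).
rewrite lift_heights_cat /lift_heights -map_comp; congr (_ ++ _).
  by apply: eq_map => k /=; rewrite subrr.
by apply: eq_map => p; congr (_, _); lia.
Qed.

Lemma tcount_ladder F a n : tcount (ladder F a n) = n.
Proof.
elim: n a => [|n IH] a; first by rewrite /ladder /= cats0 /tcount; elim: (F a).
by rewrite ladderS /tcount count_cat /= -/(tcount (ladder F a.+1 n)) IH; elim: (F a).
Qed.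

Lemma tinvcount_ladder F a n : tinvcount (ladder F a n) = 0%N.
Proof.
elim: n a => [|n IH] a; first by rewrite /ladder /= cats0 /tinvcount; elim: (F a).
rewrite ladderS /tinvcount count_cat /= -/(tinvcount (ladder F a.+1 n)) IH.
by elim: (F a).
Qed.

Lemma word_over_join_t (R : seq K) us : all (all (inR R)) us -> word_over R (join_t us).
Proof.
have inRS l : inR R l -> inS R l by case: l.
case: us => [|u us] //= /andP[Ru Rus]; rewrite /word_over all_cat.
rewrite (sub_all inRS Ru) /=; elim: us Rus => //= v us IH /andP[Rv Rus].
by rewrite all_cat (sub_all inRS Rv) IH.
Qed.

Lemma heights_over {R : seq K} {w} :
  word_over R w -> {in heights w, forall p, p.2 \in R}.
Proof.
elim: w => [|[k|b] w IH] //=; rewrite /word_over /=.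
- by case/andP=> Rk Rw p; rewrite inE => /predU1P[-> //|]; apply: IH.
- by move=> Rw p /mapP[q /(IH Rw) Rq ->].
Qed.

Lemma layer_over (R : seq K) M i : {in M, forall p, p.2 \in R} ->
  all (inR R) (map inl (layer M i)).
Proof.
move=> RM; rewrite all_map; apply/allP => k /mapP[p].
by rewrite mem_filter => /andP[_ /RM Rp] ->.
Qed.

Lemma heights_prefix w p : p \in heights w -> exists j, p.1 = texp (take j w).
Proof.
elim: w p => [|[k|b] w IH] p //=.
- rewrite inE => /predU1P[-> | /IH[j ->]]; first by exists 0%N.
  by exists j.+1.
- case/mapP => q /IH[j hj] ->; exists j.+1; rewrite /= hj.
  by rewrite /texp /tcount /tinvcount; case: b => /=; lia.
Qed.

Lemma texp_take_sub w j1 j2 :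
  texp (take j1 w) - texp (take j2 w) <= maxn (tcount w) (tinvcount w).
Proof.
rewrite /texp /tcount /tinvcount.
have := count_take_le is_t j1 w; have := count_take_le is_t j2 w.
have := count_take_le is_tinv j1 w; have := count_take_le is_tinv j2 w.
case: (leqP j2 j1) => [j21|/ltnW j12].
- by have := count_take_mono is_t w j21; have := count_take_mono is_tinv w j21; lia.
- by have := count_take_mono is_t w j12; have := count_take_mono is_tinv w j12; lia.
Qed.

Lemma heights_window w : exists c : nat, (c <= tinvcount w)%N /\
  {in heights w, forall p, 0 <= p.1 + c%:Z <= maxn (tcount w) (tinvcount w)}.
Proof.
pose f (j : 'I_(size w).+1) := texp (take j w).
have [i _ imin] := arg_minP f (isT : xpredT ord0).
have min_i j : texp (take i w) <= texp (take j w).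
  have [jw|/ltnW wj] := leqP j (size w).
    by have := imin (Ordinal (jw : j < (size w).+1)%N) isT.
  by rewrite (take_oversize wj); have := imin ord_max isT; rewrite /f /= take_size.
have i_le0 : texp (take i w) <= 0 by have := min_i 0%N; rewrite take0.
have [c ic] : exists c : nat, texp (take i w) = - c%:Z.
  by exists `|texp (take i w)|%N; rewrite abszE ler0_norm ?opprK.
exists c; split.
  by have := count_take_le is_tinv i w; move: ic; rewrite /texp /tinvcount; lia.
move=> p /heights_prefix[j ->]; have := min_i j; have := texp_take_sub w j i; lia.
Qed.

Definition Kconj (m : int) (x y : K) : Prop := exists c, y = x + c - P m c.

Lemma Kconj_gconj {m x y} : Kconj m x y -> exists h, (y, m) = gconj h (x, m).
Proof.
case=> c ->; exists (c, 0); rewrite /gmul /ginv /=.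
by rewrite add0r subr0 phipowN [c + x]addrC.
Qed.

Lemma Kconj_refl m x : Kconj m x x.
Proof. by exists 0; rewrite phipow0 subr0 addr0. Qed.

Lemma Kconj_sym {m x y} : Kconj m x y -> Kconj m y x.
Proof.
by case=> c ->; exists (- c); rewrite phipowN opprK [x + c - _]addrAC addrK subrK.
Qed.

Lemma Kconj_trans {m x y z} : Kconj m x y -> Kconj m y z -> Kconj m x z.
Proof.
case=> c -> [c' ->]; exists (c + c').
by rewrite phipowD opprD !addrA [_ - P m c + c']addrAC.
Qed.

Lemma Kconj_add {m x y x' y'} : Kconj m x y -> Kconj m x' y' -> Kconj m (x + x') (y + y').
Proof.
case=> c -> [c' ->]; exists (c + c').
by rewrite phipowD opprD addrACA [x + c + _]addrACA.
Qed.

Lemma Kconj_phipow m x : Kconj m x (P m x).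
Proof. by exists (- x); rewrite phipowN opprK subrr add0r. Qed.

Lemma Kconj_shift m h n x : Kconj m (P h x) (P (h + n * m) x).
Proof.
elim/int_rec: n => [|n IH|n IH]; first by rewrite mul0r addr0; apply: Kconj_refl.
- have -> : h + n.+1%:Z * m = h + n%:Z * m + m by rewrite -addn1 PoszD; ring.
  by apply: (Kconj_trans IH); rewrite -(phipow_comp m); apply: Kconj_phipow.
- have E : h + - n%:Z * m = h + - n.+1%:Z * m + m by rewrite -addn1 PoszD; ring.
  apply: (Kconj_trans IH); apply: Kconj_sym.
  by rewrite E -(phipow_comp m); apply: Kconj_phipow.
Qed.

Lemma Kconj_hsum_mod m L : Kconj m (hsum L) (hsum [seq ((p.1 %% m)%Z, p.2) | p <- L]).
Proof.
elim: L => [|p L IH]; first exact: Kconj_refl.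
rewrite /hsum /= !big_cons; apply: Kconj_add IH.
have -> : (p.1 %% m)%Z = p.1 + - (p.1 %/ m)%Z * m by rewrite {2}(divz_eq p.1 m); ring.
exact: Kconj_shift.
Qed.

Lemma positive_word_split {R : seq K} {w} : word_over R w -> tinvcount w = 0%N ->
  exists us v, w = flatten [seq u ++ [:: inr true] | u <- us] ++ v /\
    all (all (inR R)) us /\ all (inR R) v /\ size us = tcount w.
Proof.
rewrite /word_over /tinvcount /tcount.
elim: w => [|[k|[]] w IH] //=; first by exists [::], [::].
- case/andP=> Rk /IH{}IH /IH[[|u us] [v [-> [Rus [Rv <-]]]]].
    by exists [::], (inl k :: v); rewrite /= Rk Rv.
  by exists ((inl k :: u) :: us), v; move: Rus => /= /andP[-> ->]; rewrite Rk.
- move=> /IH{}IH /IH[us [v [-> [Rus [Rv <-]]]]].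
  by exists ([::] :: us), v; rewrite /= Rus Rv.
Qed.

Lemma size_ladder F a n : size (ladder F a n) = (size (layered F (iota a n.+1)) + n)%N.
Proof.
by rewrite size_word heights_ladder size_map tcount_ladder tinvcount_ladder addn0.
Qed.

Lemma texp_ladder F a n : texp (ladder F a n) = n%:Z.
Proof. by rewrite /texp tcount_ladder tinvcount_ladder subr0. Qed.

Lemma heights_tpow b n : heights (tpow K b n) = [::].
Proof. by elim: n => //= n ->. Qed.

Lemma texp_tpow b n : texp (tpow K b n) = if b then n%:Z else - n%:Z.
Proof. by rewrite /texp /tcount /tinvcount !count_nseq; case: b => /=; lia. Qed.

Lemma texp_take_ladder_tpow F d c : (c <= d)%N ->
  texp (take (size (ladder F 0 d) + (d - c)) (ladder F 0 d ++ tpow K false d)) = c%:Z.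
Proof.
move=> cd; rewrite takeD take_size_cat // drop_size_cat // take_nseq ?leq_subr //.
by rewrite texp_cat texp_ladder texp_tpow; lia.
Qed.

Section MinimalRepresentative.
Variables (R : seq K) (wg : seq (letter K)).
Hypotheses (wg_over : word_over R wg)
  (wg_min : forall h w, word_over R w -> ev w = gconj h (ev wg) -> (size wg <= size w)%N).

Lemma geodesic_of_rot {j w} : word_over R w -> (size w <= size wg)%N ->
  ev (rot j w) = ev wg -> geodesic phi phiinv R w.
Proof.
move=> Rw w_le rot_wg; split=> // w' Rw' ev_w'.
apply: leq_trans (size_freduce w) _; apply: leq_trans w_le _.
by apply: (@wg_min (ev (take j w))) => //; rewrite ev_w' (evalw_rot_conj j w) rot_wg.
Qed.

Lemma min_rep_texp0 : texp wg = 0 ->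
  exists w, inC0 phi phiinv R w /\ exists j : nat, ev (rot j w) = ev wg.
Proof.
move=> wg0; set d := tcount wg.
have dd : tinvcount wg = d by move: wg0; rewrite /texp; lia.
have [c [cd Hc]] := heights_window wg; rewrite dd -/d maxnn in cd Hc.
set M := lift_heights c%:Z (heights wg).
have M_range : {in M, forall p, 0 <= p.1 < d.+1%:Z}.
  by move=> _ /mapP[p /Hc pc ->] /=; rewrite -addn1 PoszD ltzD1.
have RM : {in M, forall p, p.2 \in R}.
  by move=> _ /mapP[p /(heights_over wg_over) Rp ->].
set us := [seq map (@inl K bool) (layer M i) | i <- iota 0 d.+1].
have Rus : all (all (inR R)) us.
  by rewrite all_map; apply/allP => i _; apply: layer_over.
set w := ladder (layer M) 0 d ++ tpow K false d.
have hw : perm_eq (heights w) M.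
  rewrite heights_cat heights_tpow cats0 heights_ladder oppr0 lift_heights0.
  exact: perm_layered_iota.
have tw : texp w = 0 by rewrite texp_cat texp_ladder texp_tpow subrr.
set j := (size (ladder (layer M) 0 d) + (d - c))%N.
have rot_w : ev (rot j w) = ev wg.
  rewrite evalw_rot_balanced // texp_take_ladder_tpow // /hsum (perm_big _ hw).
  by rewrite -/(hsum M) hsum_lift phipow_comp subrr [ev wg]evalw_heights wg0.
have Rw : word_over R w.
  rewrite /word_over all_cat -/(word_over R (join_t us)) word_over_join_t //.
  by rewrite all_nseq orbT.
have size_w : size w = size wg.
  rewrite size_cat size_ladder size_nseq (size_word wg) dd.
  by rewrite (perm_size (perm_layered_iota M_range)) size_map.
have geo_w := geodesic_of_rot Rw (eq_leq size_w) rot_w.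
exists w; split; last by exists j.
split; last by exists d, us; rewrite size_map size_iota.
split=> //; exists 0%N, d, 0%N, us; rewrite size_map size_iota /=.
by rewrite /tpow /= cats0.
Qed.

Lemma min_rep_tinvcount0 {m} : (0 < m)%N -> texp wg = m%:Z -> tinvcount wg = 0%N.
Proof.
move=> m_gt0 wgm; set M := [seq ((p.1 %% m)%Z, p.2) | p <- heights wg].
have M_range : {in M, forall p, 0 <= p.1 < m.+1%:Z}.
  move=> _ /mapP[p _ ->] /=; rewrite modz_ge0 ?ltzS ?ltz_pmod //; lia.
have RM : {in M, forall p, p.2 \in R}.
  by move=> _ /mapP[p /(heights_over wg_over) Rp ->].
set w := ladder (layer M) 0 m.
have Rw : word_over R w.
  by apply: word_over_join_t; rewrite all_map; apply/allP => i _; apply: layer_over.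
have [h conj_h] := Kconj_gconj (Kconj_hsum_mod m (heights wg)).
have := @wg_min h w Rw; rewrite evalw_heights heights_ladder oppr0 lift_heights0.
rewrite /hsum (perm_big _ (perm_layered_iota M_range)) texp_ladder -/(hsum M) conj_h.
rewrite -wgm -evalw_heights => /(_ erefl).
rewrite size_ladder (perm_size (perm_layered_iota M_range)) size_map size_word.
by move: wgm; rewrite /texp; lia.
Qed.

Lemma min_rep_texp_pos m : (0 < m)%N -> texp wg = m%:Z ->
  exists w, inCm phi phiinv R m w /\ exists j : nat, ev (rot j w) = ev wg.
Proof.
move=> m_gt0 wgm; have wg_t0 := min_rep_tinvcount0 m_gt0 wgm.
have wg_tm : tcount wg = m by move: wgm; rewrite /texp wg_t0; lia.
have [[|u0 us] [v [wg_eq [Rus [Rv size_us]]]]] := positive_word_split wg_over wg_t0.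
  by move: m_gt0; rewrite -wg_tm -size_us.
set A := flatten [seq u ++ [:: inr true] | u <- u0 :: us].
have rot_w : ev (rot (size v) (v ++ A)) = ev wg by rewrite rot_size_cat -wg_eq.
have Rw : word_over R (v ++ A).
  by move: wg_over; rewrite /word_over wg_eq !all_cat andbC.
have size_w : (size (v ++ A) <= size wg)%N by rewrite wg_eq !size_cat addnC.
exists (v ++ A); split; last by exists (size v).
split; first exact: geodesic_of_rot Rw size_w rot_w.
exists ((v ++ u0) :: us); split; first by rewrite /= -wg_tm -size_us.
split; first by move: Rus; rewrite /= all_cat Rv => ->.
by rewrite /A /= !catA.
Qed.

End MinimalRepresentative.

End SemidirectProduct.

Theorem lemma2p2 (K : zmodType) (phi phiinv : K -> K)
  (phi_add : {morph phi : x y / x + y})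
  (phiK : cancel phi phiinv) (phiinvK : cancel phiinv phi)
  (R : seq K) (R_sym : forall k, k \in R -> - k \in R)
  (S_gen : forall g : K * int, exists w, word_over R w /\ evalw phi phiinv w = g)
  (g : K * int) (hg : min_conj_rep phi phiinv R g) :
  (g.2 = 0 ->
     exists w, inC0 phi phiinv R w /\ exists j : nat, evalw phi phiinv (rot j w) = g) /\
  (forall m : nat, (0 < m)%N -> g.2 = m%:Z ->
     exists w, inCm phi phiinv R m w /\ exists j : nat, evalw phi phiinv (rot j w) = g).
Proof.
case: hg => wg [wg_over [<- wg_min]].
have texp_wg : (evalw phi phiinv wg).2 = texp wg by rewrite evalw_heights.
rewrite texp_wg; split=> [wg0 | m m_gt0 wgm].
- exact: (min_rep_texp0 phi_add phiK phiinvK wg_over wg_min wg0).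
- exact: (min_rep_texp_pos phi_add phiK phiinvK wg_over wg_min m_gt0 wgm).
Qed.
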